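(* For every metric space $(X,d_X)$, every $q\in[1,\infty)$ and every $m,n\in\mathbb{N}$, $$\mathcal{C}^{\{-1,0,1\}}_{q,m,n}(X,d_X)\le 6^{1/q}\max_{k\in\{1,\dots,n\}}\mathcal{C}^{\{-1,1\}}_{q,m,k}(X,d_X)\qquad\text{and}\qquad \mathcal{C}^{\{-1,1\}}_{q,2m,n}(X,d_X)\le 2\,\mathcal{C}^{\{-1,0,1\}}_{q,m,n}(X,d_X).$$
   Context: $\mathbb{Z}_{2m}=\mathbb{Z}/2m\mathbb{Z}$, arithmetic mod $2m$, $e_i$ the standard basis. $\mathcal{C}^{\{-1,0,1\}}_{q,m,n}(X,d_X)$ is the infimum of $\mathcal{C}>0$ such that every $f:\mathbb{Z}_{2m}^n\to X$ satisfies $\big(\sum_{i=1}^n\sum_{x\in\mathbb{Z}_{2m}^n}d_X(f(x+me_i),f(x))^q\big)^{1/q}\le\mathcal{C}m\big(3^{-n}\sum_{\varepsilon\in\{-1,0,1\}^n}\sum_{x\in\mathbb{Z}_{2m}^n}d_X(f(x+\varepsilon),f(x))^q\big)^{1/q}$. $\mathcal{C}^{\{-1,1\}}_{q,m,n}(X,d_X)$ is the infimum of $\mathcal{C}_*>0$ such that every $f:\mathbb{Z}_{2m}^n\to X$ satisfies the same inequality with the right-hand average replaced by $2^{-n}\sum_{\varepsilon\in\{-1,1\}^n}\sum_{x\in\mathbb{Z}_{2m}^n}d_X(f(x+\varepsilon),f(x))^q$ and $\mathcal{C}$ by $\mathcal{C}_*$. *)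

From HB Require Import structures.
From mathcomp Require Import all_boot all_order all_algebra.
From Stdlib Require Import Reals ClassicalEpsilon.

Set Implicit Arguments. Unset Strict Implicit. Unset Printing Implicit Defensive.

Record metric_space := MetricSpace {
  carrier : Type;
  dist : carrier -> carrier -> R;
  dist_nonneg : forall x y, (0 <= dist x y)%R;
  dist_eq0 : forall x y, dist x y = 0%R <-> x = y;
  dist_sym : forall x y, dist x y = dist y x;
  dist_tri : forall x y z, (dist x z <= dist x y + dist y z)%R
}.

Section Torus.
Local Open Scope ring_scope.
Variables (m n : nat).

Definition pt := {ffun 'I_n -> 'Z_(2 * m)}.

Definition shift (x : pt) (v : 'I_n -> 'Z_(2 * m)) : pt := [ffun j => x j + v j].

Definition medge (i : 'I_n) : 'I_n -> 'Z_(2 * m) :=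
  fun j => if j == i then (m%:R : 'Z_(2 * m)) else 0.

(* eps in {-1,0,1}^n, encoded by e : 'I_n -> 'I_3 via eps_j = e_j - 1 *)
Definition tern (e : {ffun 'I_n -> 'I_3}) : 'I_n -> 'Z_(2 * m) :=
  fun j => (nat_of_ord (e j))%:R - 1.

(* eps in {-1,1}^n, encoded by b : 'I_n -> bool via eps_j = if b_j then 1 else -1 *)
Definition sgnv (b : {ffun 'I_n -> bool}) : 'I_n -> 'Z_(2 * m) :=
  fun j => if b j then 1 else -1.
End Torus.

Local Open Scope R_scope.

(* real power t^s, with 0^s = 0 (used only with s > 0) *)
Definition rpow (t s : R) : R := if Rle_dec t 0 then 0 else Rpower t s.

Definition Rsum (T : finType) (F : T -> R) : R := \big[Rplus/0]_(x : T) F x.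

Definition lhs (X : metric_space) (q : R) (m n : nat) (f : pt m n -> carrier X) : R :=
  rpow (Rsum (fun i : 'I_n => Rsum (fun x : pt m n =>
          rpow (dist (f (shift x (medge m i))) (f x)) q))) (/ q).

Definition rhs0 (X : metric_space) (q : R) (m n : nat) (f : pt m n -> carrier X) : R :=
  rpow (/ (3 ^ n) * Rsum (fun e : {ffun 'I_n -> 'I_3} => Rsum (fun x : pt m n =>
          rpow (dist (f (shift x (tern m e))) (f x)) q))) (/ q).

Definition rhs1 (X : metric_space) (q : R) (m n : nat) (f : pt m n -> carrier X) : R :=
  rpow (/ (2 ^ n) * Rsum (fun b : {ffun 'I_n -> bool} => Rsum (fun x : pt m n =>
          rpow (dist (f (shift x (sgnv m b))) (f x)) q))) (/ q).

Definition admissible0 (X : metric_space) (q : R) (m n : nat) (C : R) : Prop :=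
  0 < C /\ forall f : pt m n -> carrier X, @lhs X q m n f <= C * INR m * @rhs0 X q m n f.

Definition admissible1 (X : metric_space) (q : R) (m n : nat) (C : R) : Prop :=
  0 < C /\ forall f : pt m n -> carrier X, @lhs X q m n f <= C * INR m * @rhs1 X q m n f.

(* ---------- Extended reals [-oo excluded]: None = +oo ---------- *)
Definition ereal := option R.

Definition is_glb (P : R -> Prop) (a : R) : Prop :=
  (forall C, P C -> a <= C) /\ (forall b, (forall C, P C -> b <= C) -> b <= a).

Definition is_einf (P : R -> Prop) (o : ereal) : Prop :=
  match o with
  | None => forall C, ~ P C
  | Some a => is_glb P a
  end.

Definition einf (P : R -> Prop) : ereal :=
  epsilon (inhabits None) (fun o => is_einf P o).

Definition ele (a b : ereal) : Prop :=
  match a, b with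
  | _, None => True
  | None, Some _ => False
  | Some x, Some y => x <= y
  end.

Definition escale (c : R) (a : ereal) : ereal :=
  match a with None => None | Some x => Some (c * x) end.

Definition emax (a b : ereal) : ereal :=
  match a, b with
  | Some x, Some y => Some (Rmax x y)
  | _, _ => None
  end.

(* max_{k in {1..n}} g k ; all constants are >= 0, so the base value 0 is harmless *)
Definition emax_range (g : nat -> ereal) (n : nat) : ereal :=
  foldr (fun k acc => emax (g k) acc) (Some 0) (iota 1 n).

Definition C_pm0 (X : metric_space) (q : R) (m n : nat) : ereal :=
  einf (admissible0 X q m n).
Definition C_pm1 (X : metric_space) (q : R) (m n : nat) : ereal :=
  einf (admissible1 X q m n).

From Pilot Require Import Defs.
From HB Require Import structures.
From mathcomp Require Import all_boot all_algebra zify.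
From Stdlib Require Import Reals Lra ClassicalEpsilon Classical.
From mathcomp Require algebra_tactics.ring.

Set Implicit Arguments. Unset Strict Implicit. Unset Printing Implicit Defensive.
Import GRing.Theory.

Local Open Scope R_scope.

(* Write [E_f(v) = sum_x d(f(x + v), f(x))^q].  Both inequalities compare averages of
   [E_f] over sets of directions, through one transfer principle: an inequality
   [sum_i E_g(a_i) <= c sum_j E_g(b_j)] valid for all [g] on a torus [Z_{2m'}^k] holds
   for [f] on [Z_{2m}^n] with directions [sigma a_i], [sigma b_j] whenever [sigma] is
   additive, by applying it to [z |-> f(y + sigma z)] and averaging over [y].

   First inequality: split [{-1,0,1}^n] according to the support [S] of [eps].  Along
   the embedding of [Z_{2m}^|S|] onto the coordinates in [S], the [{-1,1}^|S|]
   inequality bounds [sum_{j in S} E_f(m e_j)] by the average of [E_f(eps)] over the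
   [eps] of support [S].  Summing over [S], each [j] lies in the support of at least
   half of all [eps], which gives the constant [2^(1/q) <= 6^(1/q)].

   Second inequality: along [z |-> 2z] from [Z_{2m}^n] into [Z_{4m}^n], the
   [{-1,0,1}^n] inequality bounds the energies of [f] in the directions [2m e_i] by
   those in the directions [2 eps].  Writing [2 eps = delta + delta'] with
   [delta, delta'] in [{-1,1}^n], the triangle inequality gives
   [E_f(2 eps) <= 2^q (E_f(delta) + E_f(delta'))], and an auxiliary random sign makes
   [delta] uniform; since [2 * 2^q <= 2^(2q)], the constant [2 C] is admissible. *)

Lemma RplusA : associative Rplus. Proof. by move=> *; rewrite Rplus_assoc. Qed.
HB.instance Definition _ := Monoid.isComLaw.Build R 0 Rplus RplusA Rplus_comm Rplus_0_l.

Section Rsum.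
Variable T : finType.
Implicit Types F G : T -> R.

Lemma eq_Rsum F G : (forall x, F x = G x) -> Rsum F = Rsum G.
Proof. by move=> FG; apply: eq_bigr. Qed.

Lemma ler_Rsum F G : (forall x, F x <= G x) -> Rsum F <= Rsum G.
Proof.
move=> FG; apply: (big_ind2 (fun a b => a <= b)) => //; first lra.
by move=> *; apply: Rplus_le_compat.
Qed.

Lemma Rsum_ge0 F : (forall x, 0 <= F x) -> 0 <= Rsum F.
Proof. by move=> F0; apply: (big_ind (fun a => 0 <= a)) => // [|a b]; lra. Qed.

Lemma RsumD F G : Rsum (fun x => F x + G x) = Rsum F + Rsum G.
Proof. exact: big_split. Qed.

Lemma Rsum_mulr c F : Rsum (fun x => c * F x) = c * Rsum F.
Proof. by apply: (big_ind2 (fun a b => a = c * b)) => // [|? ? ? ? -> ->]; lra. Qed.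

Lemma iter_Rplus k c : iter k (Rplus c) 0 = INR k * c.
Proof. by elim: k => [|k IH] /=; [lra | rewrite IH; case: k {IH} => [|k] /=; lra]. Qed.

Lemma big_const_INR (A : {pred T}) c : \big[Rplus/0]_(x in A) c = INR #|A| * c.
Proof. by rewrite big_const iter_Rplus. Qed.

Lemma Rsum_const c : Rsum (fun _ : T => c) = INR #|T| * c.
Proof. by rewrite /Rsum big_const iter_Rplus. Qed.

Lemma Rsum_reindex_inj (h : T -> T) F : injective h -> Rsum (fun x => F (h x)) = Rsum F.
Proof. by move=> h_inj; symmetry; apply: reindex_inj. Qed.

End Rsum.

Lemma exchange_Rsum (T1 T2 : finType) (F : T1 -> T2 -> R) :
  Rsum (fun x => Rsum (F x)) = Rsum (fun y => Rsum (fun x => F x y)).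
Proof. exact: exchange_big. Qed.

Lemma INR_gt0 k : (0 < k)%nat -> 0 < INR k.
Proof. by move=> k_gt0; apply/lt_0_INR/ltP. Qed.

Lemma INR_card_gt0 (T : finType) (x : T) : 0 < INR #|T|.
Proof. by apply/INR_gt0/card_gt0P; exists x. Qed.

Lemma INR_expn (a k : nat) : INR (expn a k) = INR a ^ k.
Proof. by elim: k => [|k IH] //; rewrite expnS mult_INR IH. Qed.

Lemma INR_card_ffun (T : finType) k : INR #|{ffun 'I_k -> T}| = INR #|T| ^ k.
Proof. by rewrite card_ffun card_ord INR_expn. Qed.

Lemma INR_card_ffun_bool k : INR #|{ffun 'I_k -> bool}| = 2 ^ k.
Proof. by rewrite INR_card_ffun card_bool. Qed.

Lemma INR_card_ffun_I3 k : INR #|{ffun 'I_k -> 'I_3}| = 3 ^ k.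
Proof. by rewrite INR_card_ffun card_ord; congr (_ ^ _); simpl; lra. Qed.

Lemma rpow_le0 t s : t <= 0 -> rpow t s = 0.
Proof. by rewrite /rpow; case: Rle_dec. Qed.

Lemma rpowE t s : 0 < t -> rpow t s = Rpower t s.
Proof. by move=> t_gt0; rewrite /rpow; case: Rle_dec => // ?; lra. Qed.

Lemma rpow_gt0 t s : 0 < t -> 0 < rpow t s.
Proof. by move=> t_gt0; rewrite rpowE //; apply: exp_pos. Qed.

Lemma rpow_ge0 t s : 0 <= rpow t s.
Proof.
case: (Rle_dec t 0) => [t_le0|t_gt0]; first by rewrite rpow_le0 //; lra.
by apply: Rlt_le; apply: rpow_gt0; lra.
Qed.

Lemma ler_rpow s t u : 0 < s -> t <= u -> rpow t s <= rpow u s.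
Proof.
move=> s_gt0 tu; case: (Rle_dec t 0) => [t_le0|t_gt0].
  by rewrite rpow_le0 //; apply: rpow_ge0.
by rewrite !rpowE; try lra; apply: Rle_Rpower_l; lra.
Qed.

Lemma rpowM a b s : 0 <= a -> 0 <= b -> rpow (a * b) s = rpow a s * rpow b s.
Proof.
move=> a_ge0 b_ge0.
case: (Req_dec a 0) => [->|a_neq0]; first by rewrite Rmult_0_l !(@rpow_le0 0) //; lra.
case: (Req_dec b 0) => [->|b_neq0]; first by rewrite Rmult_0_r !(@rpow_le0 0) //; lra.
rewrite !rpowE; try lra; last by apply: Rmult_lt_0_compat; lra.
by rewrite Rpower_mult_distr; lra.
Qed.

Lemma rpowK s t : 0 < s -> 0 <= t -> rpow (rpow t s) (/ s) = t.
Proof.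
move=> s_gt0 t_ge0; case: (Req_dec t 0) => [->|t_neq0].
  by rewrite !(@rpow_le0 0) //; lra.
rewrite (rpowE _ (rpow_gt0 _ _)); last lra.
by rewrite rpowE ?Rpower_mult ?Rinv_r ?Rpower_1; lra.
Qed.

Lemma rpowVK s t : 0 < s -> 0 <= t -> rpow (rpow t (/ s)) s = t.
Proof. by move=> s_gt0; rewrite -{2}(Rinv_inv s); apply/rpowK/Rinv_0_lt_compat. Qed.

Lemma rpow_le_scaled s a b c : 0 < s -> 0 <= a -> 0 <= b -> 0 < c ->
  rpow a (/ s) <= c * rpow b (/ s) <-> a <= rpow c s * b.
Proof.
move=> s_gt0 a_ge0 b_ge0 c_gt0; have s'_gt0 := Rinv_0_lt_compat _ s_gt0.
split=> [le_ab|le_ab].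
- move: (ler_rpow s_gt0 le_ab).
  rewrite rpowM; [|lra|exact: rpow_ge0].
  by rewrite !rpowVK.
- move: (ler_rpow s'_gt0 le_ab).
  rewrite rpowM; [|exact: rpow_ge0|lra].
  by rewrite rpowK //; lra.
Qed.

Lemma rpowD_le s a b : 0 < s -> 0 <= a -> 0 <= b ->
  rpow (a + b) s <= rpow 2 s * (rpow a s + rpow b s).
Proof.
move=> s_gt0 a_ge0 b_ge0.
have le_max : a + b <= 2 * Rmax a b by move: (Rmax_l a b) (Rmax_r a b); lra.
apply: Rle_trans (ler_rpow s_gt0 le_max) _.
rewrite rpowM; [|lra|apply: Rle_trans (Rmax_l a b); lra].
apply: Rmult_le_compat_l; first exact: rpow_ge0.
have := rpow_ge0 a s; have := rpow_ge0 b s.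
by rewrite /Rmax; case: Rle_dec; lra.
Qed.

Lemma rpow2_ge2 s : 1 <= s -> 2 <= rpow 2 s.
Proof.
move=> s_ge1; rewrite rpowE; last lra.
by have := @Rle_Rpower 2 1 s ltac:(lra) s_ge1; rewrite Rpower_1; lra.
Qed.

(* [R_scope] and [ring_scope] share the key [R]; [%ring] selects the latter. *)
Delimit Scope ring_scope with ring.

Section Torus.
Variables (m n : nat).

Definition addv (v w : 'I_n -> 'Z_(2 * m)) j : 'Z_(2 * m) := (v j + w j)%ring.

Lemma shiftA (x : pt m n) v w : shift (shift x v) w = shift x (addv v w).
Proof. by apply/ffunP => j; rewrite !ffunE addrA. Qed.

Lemma eq_shift (x : pt m n) v w : v =1 w -> shift x v = shift x w.
Proof. by move=> vw; apply/ffunP => j; rewrite !ffunE vw. Qed.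

Lemma shift_inj v : injective (fun x : pt m n => shift x v).
Proof.
move=> x y /ffunP xy; apply/ffunP => j.
by move: (xy j); rewrite !ffunE => /addIr.
Qed.

Lemma Rsum_shift (F : pt m n -> R) v : Rsum (fun x => F (shift x v)) = Rsum F.
Proof. exact: Rsum_reindex_inj (@shift_inj v). Qed.

Lemma INR_card_pt_gt0 : 0 < INR #|pt m n|.
Proof. exact: (INR_card_gt0 [ffun=> 0%ring]). Qed.

Definition energy (X : metric_space) (q : R) (f : pt m n -> carrier X)
    (v : 'I_n -> 'Z_(2 * m)) : R :=
  Rsum (fun x => rpow (Defs.dist (f (shift x v)) (f x)) q).

Variables (X : metric_space) (q : R).
Implicit Type f : pt m n -> carrier X.

Lemma energy_ge0 f v : 0 <= energy q f v.
Proof. by apply: Rsum_ge0 => x; apply: rpow_ge0. Qed.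

Lemma eq_energy f v w : v =1 w -> energy q f v = energy q f w.
Proof. by move=> vw; apply: eq_Rsum => x; rewrite (eq_shift x vw). Qed.

Lemma energyD_le f v w : 0 < q ->
  energy q f (addv v w) <= rpow 2 q * (energy q f v + energy q f w).
Proof.
move=> q_gt0; rewrite -[energy q f w](Rsum_shift _ v) -RsumD -Rsum_mulr.
apply: ler_Rsum => x; rewrite -shiftA Rplus_comm.
apply: Rle_trans (rpowD_le _ _ _) => //; try exact: Defs.dist_nonneg.
exact/ler_rpow/Defs.dist_tri.
Qed.

End Torus.

Lemma bound_mono (A a b C C' : R) :
  0 <= a -> 0 <= b -> C <= C' -> A <= C * a * b -> A <= C' * a * b.
Proof. by move=> a_ge0 b_ge0 CC' le_A; have := Rmult_le_pos _ _ a_ge0 b_ge0; nra. Qed.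

Section Admissible.
Variables (X : metric_space) (q : R) (m n : nat).
Hypotheses (q_gt0 : 0 < q) (m_gt0 : (0 < m)%nat).

Lemma avg_energy_ge0 (T : finType) (a : T -> 'I_n -> 'Z_(2 * m))
    (f : pt m n -> carrier X) r k :
  0 < r -> 0 <= / r ^ k * Rsum (fun t => energy q f (a t)).
Proof.
move=> r_gt0; apply: Rmult_le_pos; last by apply: Rsum_ge0 => t; apply: energy_ge0.
exact/Rlt_le/Rinv_0_lt_compat/pow_lt.
Qed.

Lemma admissible0P C : 0 < C ->
  admissible0 X q m n C <-> forall f : pt m n -> carrier X,
    Rsum (fun i => energy q f (medge m i)) <=
    rpow (C * INR m) q * (/ 3 ^ n * Rsum (fun e => energy q f (tern m e))).
Proof.
move=> C_gt0; have Cm_gt0 : 0 < C * INR m by apply: Rmult_lt_0_compat; last exact: INR_gt0.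
have lhs_ge0 (f : pt m n -> carrier X) : 0 <= Rsum (fun i => energy q f (medge m i)).
  by apply: Rsum_ge0 => i; apply: energy_ge0.
have rhs_ge0 (f : pt m n -> carrier X) :
    0 <= / 3 ^ n * Rsum (fun e => energy q f (tern m e)) by apply: avg_energy_ge0; lra.
split=> [[_ le_f] f | le_f]; last split=> // f.
- exact/(rpow_le_scaled q_gt0 (lhs_ge0 f) (rhs_ge0 f) Cm_gt0)/le_f.
- exact/(rpow_le_scaled q_gt0 (lhs_ge0 f) (rhs_ge0 f) Cm_gt0)/le_f.
Qed.

Lemma admissible1P C : 0 < C ->
  admissible1 X q m n C <-> forall f : pt m n -> carrier X,
    Rsum (fun i => energy q f (medge m i)) <=
    rpow (C * INR m) q * (/ 2 ^ n * Rsum (fun b => energy q f (sgnv m b))).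
Proof.
move=> C_gt0; have Cm_gt0 : 0 < C * INR m by apply: Rmult_lt_0_compat; last exact: INR_gt0.
have lhs_ge0 (f : pt m n -> carrier X) : 0 <= Rsum (fun i => energy q f (medge m i)).
  by apply: Rsum_ge0 => i; apply: energy_ge0.
have rhs_ge0 (f : pt m n -> carrier X) :
    0 <= / 2 ^ n * Rsum (fun b => energy q f (sgnv m b)) by apply: avg_energy_ge0; lra.
split=> [[_ le_f] f | le_f]; last split=> // f.
- exact/(rpow_le_scaled q_gt0 (lhs_ge0 f) (rhs_ge0 f) Cm_gt0)/le_f.
- exact/(rpow_le_scaled q_gt0 (lhs_ge0 f) (rhs_ge0 f) Cm_gt0)/le_f.
Qed.

End Admissible.

Lemma admissible0_mono X q m n C C' :
  C <= C' -> admissible0 X q m n C -> admissible0 X q m n C'.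
Proof.
move=> CC' [C_gt0 le_f]; split=> [|f]; first lra.
exact: bound_mono (pos_INR m) (rpow_ge0 _ _) CC' (le_f f).
Qed.

Lemma admissible1_mono X q m n C C' :
  C <= C' -> admissible1 X q m n C -> admissible1 X q m n C'.
Proof.
move=> CC' [C_gt0 le_f]; split=> [|f]; first lra.
exact: bound_mono (pos_INR m) (rpow_ge0 _ _) CC' (le_f f).
Qed.

Section Transfer.
Variables (X : metric_space) (q : R) (m' k m n : nat).
Variable sigma : ('I_k -> 'Z_(2 * m')) -> 'I_n -> 'Z_(2 * m).
Hypothesis sigma_shift : forall (z : pt m' k) v, sigma (shift z v) =1 addv (sigma z) (sigma v).

Lemma energy_pullback (f : pt m n -> carrier X) v :
  Rsum (fun y => energy q (fun z => f (shift y (sigma z))) v) =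
  INR #|pt m' k| * energy q f (sigma v).
Proof.
pose F x := rpow (Defs.dist (f (shift x (sigma v))) (f x)) q.
have shift_sigma y z : shift y (sigma (shift z v)) = shift (shift y (sigma z)) (sigma v).
  by rewrite shiftA; apply: eq_shift.
have pull y :
    energy q (fun z => f (shift y (sigma z))) v = Rsum (fun z : pt m' k => F (shift y (sigma z))).
  by apply: eq_Rsum => z; rewrite shift_sigma.
rewrite (eq_Rsum pull) exchange_Rsum -Rsum_const; apply: eq_Rsum => z.
exact: Rsum_shift.
Qed.

Lemma Rsum_energy_pullback (I : finType) (a : I -> 'I_k -> 'Z_(2 * m')) (f : pt m n -> carrier X) :
  Rsum (fun y => Rsum (fun i => energy q (fun z => f (shift y (sigma z))) (a i))) =
  INR #|pt m' k| * Rsum (fun i => energy q f (sigma (a i))).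
Proof. by rewrite exchange_Rsum -Rsum_mulr; apply: eq_Rsum => i; apply: energy_pullback. Qed.

Lemma energy_transfer (I J : finType) (a : I -> 'I_k -> 'Z_(2 * m'))
    (b : J -> 'I_k -> 'Z_(2 * m')) c :
  (forall g : pt m' k -> carrier X,
     Rsum (fun i => energy q g (a i)) <= c * Rsum (fun j => energy q g (b j))) ->
  forall f : pt m n -> carrier X,
    Rsum (fun i => energy q f (sigma (a i))) <= c * Rsum (fun j => energy q f (sigma (b j))).
Proof.
move=> le_g f; have := ler_Rsum (fun y => le_g (fun z => f (shift y (sigma z)))).
rewrite Rsum_mulr !Rsum_energy_pullback -Rmult_assoc (Rmult_comm c) Rmult_assoc.
exact/Rmult_le_reg_l/INR_card_pt_gt0.
Qed.

End Transfer.

Definition eps_neg : 'I_3 := @Ordinal 3 0 isT.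
Definition eps_zero : 'I_3 := @Ordinal 3 1 isT.
Definition eps_pos : 'I_3 := @Ordinal 3 2 isT.

Lemma I3P (a : 'I_3) : [\/ a = eps_neg, a = eps_zero | a = eps_pos].
Proof.
by case: a => [[|[|[|k]]] lt_a3]; [apply: Or31 | apply: Or32 | apply: Or33 | by []];
  apply: val_inj.
Qed.

(* [2 eps_j = delta_j + delta'_j] with signs [delta_j = halfsgn (e j) c] and
   [delta'_j = halfsgn (e j) (~~ c)]: both equal [eps_j] when [eps_j = +-1], and
   they are opposite, of sign [c], when [eps_j = 0]. *)
Definition halfsgn (a : 'I_3) (c : bool) : bool :=
  if a == eps_pos then true else if a == eps_neg then false else c.

(* Completes [halfsgn] to a bijection [{-1,0,1} * {-1,1} -> {-1,1} * {-1,0,1}]: for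
   a uniform auxiliary sign, [halfsgnv e b] is uniform whatever [e] is. *)
Definition halfsgn_partner (a : 'I_3) (c : bool) : 'I_3 :=
  if a == eps_zero then eps_pos else if c then eps_neg else eps_zero.

Lemma halfsgn_bij : injective (fun p : 'I_3 * bool => (halfsgn p.1 p.2, halfsgn_partner p.1 p.2)).
Proof.
by move=> [a c] [a' c'] /= [];
  case: (I3P a) => ->; case: (I3P a') => ->; case: c; case: c'.
Qed.

Section HalfSign.
Variable n : nat.

Definition halfsgnv (e : {ffun 'I_n -> 'I_3}) (b : {ffun 'I_n -> bool}) : {ffun 'I_n -> bool} :=
  [ffun j => halfsgn (e j) (b j)].

Lemma Rsum_halfsgnv (G : {ffun 'I_n -> bool} -> R) :
  Rsum (fun e => Rsum (fun b => G (halfsgnv e b))) = INR #|{ffun 'I_n -> 'I_3}| * Rsum G.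
Proof.
pose h (p : {ffun 'I_n -> 'I_3} * {ffun 'I_n -> bool}) :=
  ([ffun j => halfsgn_partner (p.1 j) (p.2 j)], halfsgnv p.1 p.2).
have h_inj : injective h.
  move=> [e b] [e' b'] [/ffunP eq_partner /ffunP eq_half].
  have eq_j j : (e j, b j) = (e' j, b' j).
    by apply: halfsgn_bij; move: (eq_half j) (eq_partner j); rewrite !ffunE /= => -> ->.
  by congr pair; apply/ffunP => j; case: (eq_j j).
rewrite -Rsum_const /Rsum pair_big /=.
transitivity (\big[Rplus/0]_p G (h p).2) => //.
by rewrite -(reindex_inj h_inj (P := xpredT) (F := fun p => G p.2)) pair_big.
Qed.

End HalfSign.

(* Imported in a module only: mathcomp's [ring] would shadow Stdlib's on [R]. *)
Module Doubling.
Import algebra_tactics.ring.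

Section Doubling.
Variables (m n : nat).
Hypothesis m_gt0 : (0 < m)%nat.
Local Open Scope ring_scope.

Definition double (a : 'Z_(2 * m)) : 'Z_(2 * (2 * m)) := (2 * a)%:R.

Lemma double_natr k : double k%:R = (2 * k)%:R.
Proof.
rewrite /double val_Zp_nat; last lia.
by rewrite muln_modr Zp_nat_mod //; lia.
Qed.

Lemma doubleD a b : double (a + b) = double a + double b.
Proof. by rewrite -[a]natr_Zp -[b]natr_Zp -natrD !double_natr mulnDr natrD. Qed.

Lemma double_shift (z : pt m n) v j :
  double (shift z v j) = addv (fun j => double (z j)) (fun j => double (v j)) j.
Proof. by rewrite ffunE doubleD. Qed.

Lemma double_medge (i j : 'I_n) : double (medge m i j) = medge (2 * m) i j.
Proof.
rewrite /medge; case: (j == i); first by rewrite double_natr.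
by rewrite -(natr_Zp 0) double_natr muln0.
Qed.

Lemma double_tern (e : {ffun 'I_n -> 'I_3}) (b : {ffun 'I_n -> bool}) j :
  double (tern m e j) =
  addv (sgnv (2 * m) (halfsgnv e b)) (sgnv (2 * m) (halfsgnv e [ffun j => ~~ b j])) j.
Proof.
have double_sub a c : double (a - c) = double a - double c.
  apply/eqP; rewrite eq_sym subr_eq -doubleD subrK //.
have double1 : double 1 = 2%:R by rewrite -[1]mulr1n double_natr.
rewrite /tern double_sub double1 double_natr /addv /sgnv !ffunE.
by case: (I3P (e j)) => ->; case: (b j); rewrite /halfsgn /=; ring.
Qed.

End Doubling.
End Doubling.
Import Doubling.

Section DoublingEnergy.
Variables (X : metric_space) (q : R) (m n : nat).
Hypotheses (q_gt0 : 0 < q) (m_gt0 : (0 < m)%nat).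

Lemma avg_energy_double_tern_le (f : pt (2 * m) n -> carrier X) :
  / 3 ^ n * Rsum (fun e => energy q f (fun j => double (tern m e j))) <=
  2 * rpow 2 q * (/ 2 ^ n * Rsum (fun b => energy q f (sgnv (2 * m) b))).
Proof.
pose G d := energy q f (sgnv (2 * m) d).
have negv_inj : injective (fun b : {ffun 'I_n -> bool} => [ffun j => ~~ b j]).
  by move=> b b' /ffunP eq_bb'; apply/ffunP => j; move: (eq_bb' j); rewrite !ffunE => /negb_inj.
have le_e e : 2 ^ n * energy q f (fun j => double (tern m e j)) <=
              2 * rpow 2 q * Rsum (fun b => G (halfsgnv e b)).
  rewrite -INR_card_ffun_bool -Rsum_const.
  have le_b b : energy q f (fun j => double (tern m e j)) <=
                rpow 2 q * (G (halfsgnv e b) + G (halfsgnv e [ffun j => ~~ b j])).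
    by rewrite (eq_energy q f (double_tern m_gt0 e b)); apply: energyD_le.
  apply: Rle_trans (ler_Rsum le_b) _.
  rewrite Rsum_mulr RsumD (Rsum_reindex_inj (fun b => G (halfsgnv e b)) negv_inj).
  by right; ring.
have := ler_Rsum le_e; rewrite !Rsum_mulr Rsum_halfsgnv INR_card_ffun_I3 => le_sum.
have pow2_gt0 : 0 < 2 ^ n by apply: pow_lt; lra.
have pow3_gt0 : 0 < 3 ^ n by apply: pow_lt; lra.
change (Rsum _) with (Rsum G) at 2.
set S := Rsum _ in le_sum *; set T := Rsum G in le_sum *.
apply: (Rmult_le_reg_l (2 ^ n * 3 ^ n)); first exact: Rmult_lt_0_compat.
have -> : 2 ^ n * 3 ^ n * (/ 3 ^ n * S) = 2 ^ n * S by field; lra.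
have -> : 2 ^ n * 3 ^ n * (2 * rpow 2 q * (/ 2 ^ n * T)) = 2 * rpow 2 q * (3 ^ n * T).
  by field; lra.
exact: le_sum.
Qed.

End DoublingEnergy.

Lemma admissible1_double X q m n C : 1 <= q -> (0 < m)%nat ->
  admissible0 X q m n C -> admissible1 X q (2 * m) n (2 * C).
Proof.
move=> q_ge1 m_gt0 adm0; have q_gt0 : 0 < q by lra.
have C_gt0 : 0 < C by case: adm0.
have m2_gt0 : (0 < 2 * m)%nat by lia.
set c := rpow (C * INR m) q.
have le_tern (g : pt m n -> carrier X) :
    Rsum (fun i => energy q g (medge m i)) <=
    c * / 3 ^ n * Rsum (fun e => energy q g (tern m e)).
  by rewrite Rmult_assoc; apply: (proj1 (admissible0P X n q_gt0 m_gt0 C_gt0) adm0).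
apply/(admissible1P X n q_gt0 m2_gt0); first lra.
move=> f; have := energy_transfer (sigma := fun v j => double (v j)) (double_shift m_gt0) le_tern f.
rewrite (eq_Rsum (fun i => eq_energy q f (double_medge m_gt0 i))) Rmult_assoc => le_double.
apply: Rle_trans le_double _.
have c_ge0 : 0 <= c by apply: rpow_ge0.
have two_le := rpow2_ge2 q_ge1.
have avg_ge0 : 0 <= / 2 ^ n * Rsum (fun b => energy q f (sgnv (2 * m) b)).
  by apply: avg_energy_ge0; lra.
have -> : 2 * C * INR (2 * m) = 2 * (2 * (C * INR m)) by rewrite mult_INR /=; ring.
have Cm_ge0 : 0 <= C * INR m by apply: Rmult_le_pos; [lra | exact: pos_INR].
rewrite (@rpowM 2) ?(@rpowM 2 (C * INR m)) //; try lra.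
apply: Rle_trans (Rmult_le_compat_l _ _ _ c_ge0 (avg_energy_double_tern_le q_gt0 m_gt0 f)) _.
set B := / 2 ^ n * _ in avg_ge0 *.
have -> : c * (2 * rpow 2 q * B) = 2 * (rpow 2 q * (c * B)) by ring.
have -> : rpow 2 q * (rpow 2 q * c) * B = rpow 2 q * (rpow 2 q * (c * B)) by ring.
apply: Rmult_le_compat_r two_le.
exact: Rmult_le_pos (rpow_ge0 _ _) (Rmult_le_pos _ _ c_ge0 avg_ge0).
Qed.

Module Support.
Import algebra_tactics.ring.

Section Support.
Variables (n : nat) (S : {set 'I_n}).

Definition index_in (j : 'I_n) : option 'I_#|S| := [pick i | enum_val i == j].

Variant index_in_spec (j : 'I_n) : option 'I_#|S| -> Type :=
  | IndexIn i of j = enum_val i : index_in_spec j (Some i)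
  | IndexOut of j \notin S : index_in_spec j None.

Lemma index_inP j : index_in_spec j (index_in j).
Proof.
rewrite /index_in; case: pickP => [i /eqP <-|none]; constructor => //.
apply/negP => jS; have := none (enum_rank_in jS j).
by rewrite enum_rankK_in ?eqxx.
Qed.

Lemma index_in_enum_val i : index_in (enum_val i) = Some i.
Proof.
case: index_inP => [i' /enum_val_inj -> // | ].
by rewrite enum_valP.
Qed.

Definition tern_on (b : {ffun 'I_#|S| -> bool}) : {ffun 'I_n -> 'I_3} :=
  [ffun j => if index_in j is Some i then (if b i then eps_pos else eps_neg) else eps_zero].

Definition supp (e : {ffun 'I_n -> 'I_3}) : {set 'I_n} := [set j | e j != eps_zero].

Lemma supp_tern_on b : supp (tern_on b) = S.
Proof.
apply/setP => j; rewrite inE ffunE.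
by case: index_inP => [i ->|/negbTE ->]; [rewrite enum_valP; case: (b i) | ].
Qed.

Lemma tern_on_inj : injective tern_on.
Proof.
move=> b b' /ffunP eq_bb'; apply/ffunP => i.
by move: (eq_bb' (enum_val i)); rewrite !ffunE index_in_enum_val; case: (b i); case: (b' i).
Qed.

Lemma image_tern_on : [set tern_on b | b in [set: {ffun 'I_#|S| -> bool}]] = [set e | supp e == S].
Proof.
apply/setP => e; rewrite inE; apply/imsetP/eqP => [[b _ ->]|supp_e]; first exact: supp_tern_on.
exists [ffun i => e (enum_val i) == eps_pos]; rewrite ?inE //.
apply/ffunP => j; rewrite !ffunE.
case: index_inP => [i ->|j_out]; rewrite ?ffunE.
  have : enum_val i \in supp e by rewrite supp_e enum_valP.
  by rewrite inE; case: (I3P (e (enum_val i))) => ->.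
by move: j_out; rewrite -supp_e inE negbK => /eqP.
Qed.

Variable m : nat.
Local Open Scope ring_scope.

Definition extend (v : 'I_#|S| -> 'Z_(2 * m)) (j : 'I_n) : 'Z_(2 * m) :=
  if index_in j is Some i then v i else 0.

Lemma extend_shift (z : pt m #|S|) v j : extend (shift z v) j = addv (extend z) (extend v) j.
Proof. by rewrite /addv /extend; case: index_inP => [i _|_]; rewrite ?ffunE ?addr0. Qed.

Lemma extend_medge i j : extend (medge m i) j = medge m (enum_val i) j.
Proof.
rewrite /extend /medge; case: index_inP => [i' ->|j_out]; first by rewrite (inj_eq enum_val_inj).
by case: eqP => // eq_j; move: j_out; rewrite eq_j enum_valP.
Qed.

Lemma tern_tern_on b j : tern m (tern_on b) j = extend (sgnv m b) j.
Proof.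
rewrite /tern /extend /sgnv ffunE.
by case: index_inP => [i _|_]; [case: (b i) | ]; rewrite /= ?subrr //; ring.
Qed.

End Support.

End Support.
Import Support.

Lemma Rsum_by_support n (G : {ffun 'I_n -> 'I_3} -> R) :
  Rsum G = Rsum (fun S : {set 'I_n} => Rsum (fun b : {ffun 'I_#|S| -> bool} => G (tern_on b))).
Proof.
rewrite /Rsum (partition_big (@supp n) xpredT) //=; apply: eq_bigr => S _.
rewrite (eq_bigl (fun e => e \in [set e | supp e == S])); last by move=> e; rewrite inE.
rewrite -image_tern_on big_imset /=; last by move=> b b' _ _; apply: tern_on_inj.
by apply: eq_bigl => b; rewrite inE.
Qed.

Lemma card_supp_ge n (j : 'I_n) :
  3 ^ n <= 2 * INR #|[set e : {ffun 'I_n -> 'I_3} | j \in supp e]|.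
Proof.
set B := [set e : {ffun 'I_n -> 'I_3} | j \in supp e].
(* Resetting coordinate [j] to [-1] injects [{e | eps_j = 0}] into [{e | eps_j <> 0}]. *)
pose reset (e : {ffun 'I_n -> 'I_3}) := [ffun t => if t == j then eps_neg else e t].
have reset_inj : {in ~: B &, injective reset}.
  move=> e e'; rewrite !inE !negbK => /eqP ej /eqP e'j /ffunP eq_ee'; apply/ffunP => t.
  by move: (eq_ee' t); rewrite !ffunE; case: eqP => [->|_ //]; rewrite ej e'j.
have le_card : (#|~: B| <= #|B|)%nat.
  rewrite -(card_in_imset reset_inj); apply/subset_leq_card/subsetP => _ /imsetP [e _ ->].
  by rewrite !inE ffunE eqxx.
have := le_INR _ _ (elimT leP le_card).
by rewrite -INR_card_ffun_I3 -(cardsC B) plus_INR; lra.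
Qed.

Lemma Rsum_big_supp n (F : 'I_n -> R) :
  Rsum (fun e : {ffun 'I_n -> 'I_3} => \big[Rplus/0]_(j in supp e) F j) =
  Rsum (fun j => INR #|[set e : {ffun 'I_n -> 'I_3} | j \in supp e]| * F j).
Proof.
rewrite /Rsum; under eq_bigr do rewrite big_mkcond.
rewrite exchange_big; apply: eq_bigr => j _.
by rewrite -big_mkcond -big_const_INR; apply: eq_bigl => e; rewrite inE.
Qed.

Section SupportEnergy.
Variables (X : metric_space) (q : R) (m n : nat).

Lemma energy_support_le (S : {set 'I_n}) c (f : pt m n -> carrier X) :
  (forall g : pt m #|S| -> carrier X,
     Rsum (fun i => energy q g (medge m i)) <=
     c * (/ 2 ^ #|S| * Rsum (fun b => energy q g (sgnv m b)))) ->
  2 ^ #|S| * \big[Rplus/0]_(j in S) energy q f (medge m j) <=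
  c * Rsum (fun b : {ffun 'I_#|S| -> bool} => energy q f (tern m (tern_on b))).
Proof.
move=> le_g; have pow2_gt0 : 0 < 2 ^ #|S| by apply: pow_lt; lra.
have le_g' (g : pt m #|S| -> carrier X) :
    Rsum (fun i => energy q g (medge m i)) <=
    c * / 2 ^ #|S| * Rsum (fun b => energy q g (sgnv m b)).
  by rewrite Rmult_assoc; apply: le_g.
have := energy_transfer (sigma := @extend n S m) (@extend_shift n S m) le_g' f.
rewrite (eq_Rsum (fun i => eq_energy q f (@extend_medge n S m i))).
rewrite (eq_Rsum (fun b => eq_energy q f (fun j => esym (@tern_tern_on n S m b j)))).
rewrite big_enum_val => le_S.
apply: Rle_trans (Rmult_le_compat_l _ _ _ (Rlt_le _ _ pow2_gt0) le_S) _.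
set T := Rsum _; right; field; lra.
Qed.

Lemma energy_medge_le_tern c (f : pt m n -> carrier X) : 0 <= c ->
  (forall k, (0 < k <= n)%nat -> forall g : pt m k -> carrier X,
     Rsum (fun i => energy q g (medge m i)) <=
     c * (/ 2 ^ k * Rsum (fun b => energy q g (sgnv m b)))) ->
  Rsum (fun j => energy q f (medge m j)) <=
  2 * c * (/ 3 ^ n * Rsum (fun e => energy q f (tern m e))).
Proof.
move=> c_ge0 le_k.
pose E j := energy q f (medge m j).
have le_supp : Rsum (fun e => \big[Rplus/0]_(j in supp e) E j) <=
               c * Rsum (fun e => energy q f (tern m e)).
  rewrite Rsum_by_support (Rsum_by_support (fun e => energy q f (tern m e))) -Rsum_mulr.
  apply: ler_Rsum => S; under eq_Rsum => b do rewrite supp_tern_on.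
  rewrite Rsum_const INR_card_ffun_bool.
  have [S0|S_gt0] := posnP #|S|.
    rewrite big_pred0 => [|j]; last by apply/negP => jS; move: S0; rewrite (cardD1 j) jS.
    rewrite Rmult_0_r; apply: Rmult_le_pos => //.
    by apply: Rsum_ge0 => b; apply: energy_ge0.
  apply: energy_support_le; apply: le_k.
  by rewrite S_gt0 /=; have := max_card S; rewrite card_ord.
have pow3_gt0 : 0 < 3 ^ n by apply: pow_lt; lra.
apply: (Rmult_le_reg_l (3 ^ n)) => //.
rewrite -Rsum_mulr.
apply: Rle_trans (_ : _ <= 2 * Rsum (fun e => \big[Rplus/0]_(j in supp e) E j)) _.
  rewrite Rsum_big_supp -Rsum_mulr; apply: ler_Rsum => j.
  by rewrite -Rmult_assoc; apply: Rmult_le_compat_r; [apply: energy_ge0 | apply: card_supp_ge].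
apply: Rle_trans (Rmult_le_compat_l 2 _ _ _ le_supp) _; first lra.
by right; field; lra.
Qed.

End SupportEnergy.

Lemma admissible0_of_admissible1 X q m n C : 0 < q -> (0 < m)%nat -> 0 < C ->
  (forall k, (0 < k <= n)%nat -> admissible1 X q m k C) ->
  admissible0 X q m n (rpow 2 (/ q) * C).
Proof.
move=> q_gt0 m_gt0 C_gt0 adm1.
have C'_gt0 : 0 < rpow 2 (/ q) * C by apply: Rmult_lt_0_compat => //; apply: rpow_gt0; lra.
apply/(admissible0P X n q_gt0 m_gt0 C'_gt0) => f.
have Cm_ge0 : 0 <= C * INR m by apply: Rmult_le_pos; [lra | exact: pos_INR].
rewrite Rmult_assoc rpowM ?rpowVK; try lra; last exact: rpow_ge0.
apply: energy_medge_le_tern; first exact: rpow_ge0.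
by move=> k k_range; apply/(admissible1P X k q_gt0 m_gt0 C_gt0)/adm1.
Qed.

Lemma einf_spec (P : R -> Prop) : (forall C, P C -> 0 <= C) -> is_einf P (einf P).
Proof.
move=> P_ge0; apply: epsilon_spec.
case: (classic (exists C, P C)) => [[C0 PC0]|empty]; last first.
  by exists None => C PC; apply: empty; exists C.
pose E x := P (- x).
have E_bound : bound E by exists 0 => x Ex; have := P_ge0 _ Ex; lra.
have E_ne : exists x, E x by exists (- C0); rewrite /E Ropp_involutive.
have [l [l_ub l_least]] := completeness E E_bound E_ne.
exists (Some (- l)); split=> [C PC | b b_lb].
- have : E (- C) by rewrite /E Ropp_involutive.
  move/l_ub; lra.
- suff : l <= - b by lra.
  by apply: l_least => x Ex; have := b_lb _ Ex; lra.
Qed.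

Lemma einf_le (P : R -> Prop) a :
  (forall C, P C -> 0 <= C) -> (forall C, a < C -> P C) -> ele (einf P) (Some a).
Proof.
move=> P_ge0 P_gt; have := einf_spec P_ge0; case: (einf P) => [b [b_lb _]|empty] /=.
  apply: Rnot_lt_le => lt_ab.
  have mid_gt : a < (a + b) / 2 by lra.
  by have := b_lb _ (P_gt _ mid_gt); lra.
by apply: (empty (a + 1)); apply: P_gt; lra.
Qed.

Lemma einf_lt (P : R -> Prop) a C :
  (forall C C', C <= C' -> P C -> P C') -> is_einf P (Some a) -> a < C -> P C.
Proof.
move=> P_up [_ a_glb] lt_aC; apply: NNPP => notPC.
suff : C <= a by lra.
apply: a_glb => C' PC'; apply: Rnot_lt_le => lt_C'C.
by apply/notPC/(P_up C'); first lra.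
Qed.

Lemma emax_range_Some (g : nat -> ereal) n K : emax_range g n = Some K ->
  0 <= K /\ forall k, (0 < k <= n)%nat -> exists2 c, g k = Some c & c <= K.
Proof.
suff max_iota s : foldr (fun k acc => emax (g k) acc) (Some 0) (iota s n) = Some K ->
    0 <= K /\ forall k, (s <= k < s + n)%nat -> exists2 c, g k = Some c & c <= K.
  by move=> /(max_iota 1%nat) [K_ge0 bounds]; split=> // k k_range; apply: bounds; lia.
elim: n s K => [|n IH] s K /=.
  by case=> <-; split=> [|k k_range]; [lra | exfalso; lia].
case gs: (g s) => [x|] //; case rest: foldr => [y|] //= [<-].
have [y_ge0 y_bounds] := IH _ _ rest.
split=> [|k k_range]; first exact: Rle_trans (Rmax_r x y).
have [->|neq_ks] := eqVneq k s; first by exists x => //; apply: Rmax_l.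
have [|c gk le_cy] := y_bounds k; first lia.
by exists c => //; apply: Rle_trans (Rmax_r x y).
Qed.

Lemma C_pm0_spec X q m n : is_einf (admissible0 X q m n) (C_pm0 X q m n).
Proof. by apply: einf_spec => C [C_gt0 _]; lra. Qed.

Lemma C_pm1_spec X q m n : is_einf (admissible1 X q m n) (C_pm1 X q m n).
Proof. by apply: einf_spec => C [C_gt0 _]; lra. Qed.

Lemma C_pm0_le_max X q m n : 1 <= q -> (0 < m)%nat ->
  ele (C_pm0 X q m n) (escale (rpow 6 (/ q)) (emax_range (fun k => C_pm1 X q m k) n)).
Proof.
move=> q_ge1 m_gt0; have q_gt0 : 0 < q by lra.
case EK: emax_range => [K|]; last by case: C_pm0.
have [K_ge0 bounds] := emax_range_Some EK.
have r6_gt0 : 0 < rpow 6 (/ q) by apply: rpow_gt0; lra.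
apply: einf_le => [C [] | C lt_C]; first lra.
pose C1 := C / rpow 6 (/ q).
have lt_KC1 : K < C1 by apply: (Rmult_lt_reg_l (rpow 6 (/ q))); rewrite // /C1; field_simplify; lra.
have adm1 k : (0 < k <= n)%nat -> admissible1 X q m k C1.
  move=> /bounds [c ck le_cK]; have := C_pm1_spec X q m k; rewrite ck.
  by move/(einf_lt (@admissible1_mono X q m k)); apply; lra.
have C1_gt0 : 0 < C1 by lra.
apply: admissible0_mono (admissible0_of_admissible1 q_gt0 m_gt0 C1_gt0 adm1).
have -> : C = rpow 6 (/ q) * C1 by rewrite /C1; field; lra.
apply: Rmult_le_compat_r; first lra.
by apply: ler_rpow; [apply: Rinv_0_lt_compat | lra].
Qed.

Lemma C_pm1_double_le X q m n : 1 <= q -> (0 < m)%nat ->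
  ele (C_pm1 X q (2 * m) n) (escale 2 (C_pm0 X q m n)).
Proof.
move=> q_ge1 m_gt0; case E0: (C_pm0 X q m n) => [a|] /=; last by case: C_pm1.
apply: einf_le => [C [] | C lt_C]; first lra.
have := C_pm0_spec X q m n; rewrite E0 => /(einf_lt (@admissible0_mono X q m n)).
have -> : C = 2 * (C / 2) by field.
by move/(_ (C / 2) ltac:(lra)); apply: admissible1_double.
Qed.

Theorem mainTheorem12 (X : metric_space) (q : R) (m n : nat) :
  1 <= q -> (0 < m)%nat ->
  ele (C_pm0 X q m n) (escale (rpow 6 (/ q)) (emax_range (fun k => C_pm1 X q m k) n)) /\
  ele (C_pm1 X q (2 * m) n) (escale 2 (C_pm0 X q m n)).
Proof. by move=> q_ge1 m_gt0; split; [apply: C_pm0_le_max | apply: C_pm1_double_le]. Qed.
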